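(* Let $G=(V,E^+\cup E^-)$ be a signed graph and let $D$ be an almost valid drawing of $G$ in the circumference $\mathcal{C}$. Then $G$ has a valid drawing in $\mathcal{C}$.
   Context: A signed graph $G=(V,E^+\cup E^-)$ is a finite, undirected, connected, loopless graph without parallel edges whose edge set is partitioned into positive edges $E^+$ and negative edges $E^-$ (with $E^+\cap E^-=\emptyset$). For $i\in V$, $N^+(i)=\{j: ij\in E^+\}$ and $N^-(i)=\{j: ij\in E^-\}$. The circumference is $\mathcal{C}=\{(x,y)\in\mathbb{R}^2:\sqrt{x^2+y^2}=1\}$; each point is identified with an angle in $[0,2\pi)$, and the distance between points $p,q$ is the measure of the smaller angle they form with the origin, i.e. for $q\le p$, $d(p,q)=\min\{(p-q)\bmod 2\pi,(2\pi-p+q)\bmod 2\pi\}$. A drawing of $G$ in $\mathcal{C}$ is an injection $D:V\to\mathcal{C}$. A drawing is valid if for all $i\in V$, all $j\in N^+(i)$ and all $k\in N^-(i)$, $d(D(i),D(j))<d(D(i),D(k))$. A drawing is almost valid if there exists $\delta>0$ such that for all $i\in V$, all $j\in N^+(i)$ and all $k\in N^-(i)$, $d(D(i),D(j))\le\delta\le d(D(i),D(k))$. *)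

From mathcomp Require Import all_boot.
From Stdlib Require Import Reals.
Open Scope R_scope.

Record signed_graph (V : finType) (pos neg : rel V) : Prop := {
  sg_pos_sym : forall i j, pos i j = pos j i;
  sg_neg_sym : forall i j, neg i j = neg j i;
  sg_pos_irr : forall i, pos i i = false;
  sg_neg_irr : forall i, neg i i = false;
  sg_disj : forall i j, ~~ (pos i j && neg i j);
  sg_conn : forall i j, connect (fun x y => pos x y || neg x y) i j
}.

(* A point of the circumference, identified with an angle in [0, 2*PI). *)
Definition on_circ (p : R) : Prop := 0 <= p < 2 * PI.

(* Angular distance: the measure of the smaller angle; for p, q in [0,2PI)
   this equals min{(p-q) mod 2PI, (2PI-p+q) mod 2PI} (q <= p). *)
Definition cdist (p q : R) : R := Rmin (Rabs (p - q)) (2 * PI - Rabs (p - q)).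

Definition drawing (V : finType) (D : V -> R) : Prop :=
  (forall i, on_circ (D i)) /\ (forall i j, D i = D j -> i = j).

Definition valid_drawing (V : finType) (pos neg : rel V) (D : V -> R) : Prop :=
  drawing V D /\
  forall i j k, pos i j -> neg i k -> cdist (D i) (D j) < cdist (D i) (D k).

Definition almost_valid_drawing (V : finType) (pos neg : rel V) (D : V -> R)
  : Prop :=
  drawing V D /\
  exists delta, delta > 0 /\
    forall i j k, pos i j -> neg i k ->
      cdist (D i) (D j) <= delta /\ delta <= cdist (D i) (D k).

From mathcomp Require Import all_boot.
From Stdlib Require Import Reals Lra Lia ZArith ClassicalEpsilon.
Open Scope R_scope.

(* Let delta witness almost validity.  Strictness can only fail for a
   positive and a negative neighbour of i both at distance exactly delta
   from i.  If delta >= PI, both would be antipodal to i, hence equal, so D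
   is already valid.  Otherwise a tight positive neighbour and a tight
   negative neighbour of i lie on opposite sides of i; rotating every vertex
   having both kinds of tight neighbours by a small eps towards its tight
   positive neighbours shortens all tight positive edges and lengthens all
   tight negative ones, and choosing eps below the finitely many nonzero
   gaps keeps injectivity and every other comparison. *)

Definition cong2PI (x y : R) : Prop := exists m : Z, x - y = 2 * PI * IZR m.

Lemma cong2PI_refl x : cong2PI x x.
Proof. exists 0%Z; simpl; ring. Qed.

Lemma cong2PI_sym x y : cong2PI x y -> cong2PI y x.
Proof. intros [m H]; exists (- m)%Z; rewrite opp_IZR; lra. Qed.

Lemma cong2PI_trans x y z : cong2PI x y -> cong2PI y z -> cong2PI x z.
Proof. intros [m H] [n H']; exists (m + n)%Z; rewrite plus_IZR; lra. Qed.

Lemma cong2PI_sub x y x' y' :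
  cong2PI x y -> cong2PI x' y' -> cong2PI (x - x') (y - y').
Proof. intros [m H] [n H']; exists (m - n)%Z; rewrite minus_IZR; lra. Qed.

Lemma cong2PI_addr x y c : cong2PI x y -> cong2PI (x + c) (y + c).
Proof. intros [m H]; exists m; lra. Qed.

Lemma cong2PI_Rabs_min b c : Rabs b <= PI -> cong2PI c b -> Rabs b <= Rabs c.
Proof.
  intros Hb [m Hm]. pose proof PI_RGT_0.
  destruct (Z.lt_trichotomy m 0) as [Hlt | [-> | Hgt]].
  - assert (IZR m <= -1) by (apply IZR_le; lia).
    assert (c <= b - 2 * PI) by nra. split_Rabs; lra.
  - simpl in Hm. replace c with b by lra. lra.
  - assert (1 <= IZR m) by (apply IZR_le; lia).
    assert (c >= b + 2 * PI) by nra. split_Rabs; lra.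
Qed.

Lemma on_circ_cong2PI_eq p q : on_circ p -> on_circ q -> cong2PI p q -> p = q.
Proof.
  unfold on_circ; intros Hp Hq [m Hm]. pose proof PI_RGT_0.
  assert (H1 : -1 < IZR m) by nra. assert (H2 : IZR m < 1) by nra.
  apply lt_IZR in H1; apply lt_IZR in H2.
  replace m with 0%Z in Hm by lia. simpl in Hm; lra.
Qed.

Lemma on_circ_sub_cong2PI_eq p q r a : on_circ q -> on_circ r ->
  cong2PI (q - p) a -> cong2PI (r - p) a -> q = r.
Proof.
  intros Hq Hr Hqa Hra. apply on_circ_cong2PI_eq; auto.
  destruct (cong2PI_sub _ _ _ _ Hqa Hra) as [m Hm]. exists m; lra.
Qed.

Lemma cdist_self p : cdist p p = 0.
Proof.
  pose proof PI_RGT_0. unfold cdist, Rmin.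
  rewrite Rminus_diag Rabs_R0. destruct Rle_dec; lra.
Qed.

Lemma cdist_le_PI p q : cdist p q <= PI.
Proof. unfold cdist, Rmin; destruct Rle_dec; lra. Qed.

Lemma cdist_rep p q : on_circ p -> on_circ q ->
  exists a, Rabs a <= PI /\ cong2PI (q - p) a /\ cdist p q = Rabs a.
Proof.
  unfold on_circ, cdist; intros Hp Hq. pose proof PI_RGT_0.
  destruct (Rlt_dec PI (q - p)).
  { exists (q - p - 2 * PI). split; [split_Rabs; lra | split].
    - exists 1%Z; simpl; lra.
    - unfold Rmin; destruct Rle_dec; split_Rabs; lra. }
  destruct (Rlt_dec (q - p) (- PI)).
  { exists (q - p + 2 * PI). split; [split_Rabs; lra | split].
    - exists (-1)%Z; simpl; lra.
    - unfold Rmin; destruct Rle_dec; split_Rabs; lra. }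
  exists (q - p). split; [split_Rabs; lra | split].
  - apply cong2PI_refl.
  - unfold Rmin; destruct Rle_dec; split_Rabs; lra.
Qed.

Lemma cdist_cong2PI p q a : on_circ p -> on_circ q -> Rabs a <= PI ->
  cong2PI (q - p) a -> cdist p q = Rabs a.
Proof.
  intros Hp Hq Ha Hqa. destruct (cdist_rep p q Hp Hq) as [b [Hb [Hqb ->]]].
  assert (Hab : cong2PI a b) by exact (cong2PI_trans _ _ _ (cong2PI_sym _ _ Hqa) Hqb).
  pose proof (cong2PI_Rabs_min b a Hb Hab).
  pose proof (cong2PI_Rabs_min a b Ha (cong2PI_sym _ _ Hab)). lra.
Qed.

Lemma cdist_ge0 p q : on_circ p -> on_circ q -> 0 <= cdist p q.
Proof.
  intros Hp Hq. destruct (cdist_rep p q Hp Hq) as [a [_ [_ ->]]]. apply Rabs_pos.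
Qed.

Lemma cdist_eq0 p q : on_circ p -> on_circ q -> cdist p q = 0 -> p = q.
Proof.
  intros Hp Hq H0. destruct (cdist_rep p q Hp Hq) as [a [_ [Hqa Ha]]].
  assert (a = 0) by (split_Rabs; lra). subst a.
  symmetry; apply (on_circ_sub_cong2PI_eq p q p 0); auto.
  replace (p - p) with 0 by ring. apply cong2PI_refl.
Qed.

Lemma cdist_PI_eq p q r : on_circ p -> on_circ q -> on_circ r ->
  cdist p q = PI -> cdist p r = PI -> q = r.
Proof.
  intros Hp Hq Hr Hpq Hpr. pose proof PI_RGT_0.
  destruct (cdist_rep p q Hp Hq) as [a [Ha [Hqa Ea]]].
  destruct (cdist_rep p r Hp Hr) as [b [Hb [Hrb Eb]]].
  apply (on_circ_sub_cong2PI_eq p q r a Hq Hr Hqa).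
  apply (cong2PI_trans _ _ _ Hrb).
  assert (a = PI \/ a = - PI) as [-> | ->] by (split_Rabs; lra);
  assert (b = PI \/ b = - PI) as [-> | ->] by (split_Rabs; lra);
  [exists 0%Z | exists (-1)%Z | exists 1%Z | exists 0%Z]; simpl; lra.
Qed.

Lemma cdist_lipschitz p q p' q' c :
  on_circ p -> on_circ q -> on_circ p' -> on_circ q' ->
  cong2PI (q' - p') ((q - p) + c) -> Rabs (cdist p' q' - cdist p q) <= Rabs c.
Proof.
  intros Hp Hq Hp' Hq' [m1 H1].
  destruct (cdist_rep p q Hp Hq) as [a [Ha [[m2 H2] ->]]].
  destruct (cdist_rep p' q' Hp' Hq') as [b [Hb [[m3 H3] ->]]].
  assert (Hx : cong2PI (a + c) b).
  { exists (m3 - m1 - m2)%Z. rewrite !minus_IZR. lra. }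
  assert (Hy : cong2PI (b - c) a).
  { exists (m1 + m2 - m3)%Z. rewrite minus_IZR plus_IZR. lra. }
  pose proof (cong2PI_Rabs_min b (a + c) Hb Hx).
  pose proof (cong2PI_Rabs_min a (b - c) Ha Hy).
  split_Rabs; lra.
Qed.

Definition wrap (x : R) : R :=
  if Rlt_dec x 0 then x + 2 * PI
  else if Rle_dec (2 * PI) x then x - 2 * PI else x.

Lemma wrap_spec x : -2 * PI <= x < 4 * PI -> on_circ (wrap x) /\ cong2PI (wrap x) x.
Proof.
  intros H. unfold wrap, on_circ.
  destruct Rlt_dec; [|destruct Rle_dec]; simpl; split; try lra.
  - exists 1%Z; simpl; lra.
  - exists (-1)%Z; simpl; lra.
  - apply cong2PI_refl.
Qed.

Lemma exists_pos_lower_bound (T : finType) (f : T -> R) :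
  exists m, 0 < m /\ forall x, 0 < f x -> m <= f x.
Proof.
  suff [m [Hm Hs]] : exists m, 0 < m /\ forall x, x \in enum T -> 0 < f x -> m <= f x.
  { exists m; split; [exact Hm|]. intros x; apply Hs; by rewrite mem_enum. }
  elim: (enum T) => [|a s [m [Hm Hs]]].
  - exists 1; split; [lra | by []].
  - destruct (Rlt_dec 0 (f a)) as [Ha | Ha].
    + exists (Rmin m (f a)); split; [by apply Rmin_glb_lt|].
      move=> x; rewrite in_cons => /orP [/eqP -> _ | Hx Hf]; first by apply Rmin_r.
      apply (Rle_trans _ m); [apply Rmin_l | by apply Hs].
    + exists m; split; [exact Hm|].
      move=> x; rewrite in_cons => /orP [/eqP -> Hf | Hx Hf]; [lra | by apply Hs].
Qed.

Definition sgn (b : bool) : R := if b then 1 else -1.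

Lemma cong2PI_sub_swap x y b d :
  cong2PI (x - y) (sgn b * d) -> cong2PI (y - x) (sgn (~~ b) * d).
Proof. intros [m H]; exists (- m)%Z; rewrite opp_IZR; case: b H => /= H; lra. Qed.

Section Perturbation.

Variables (V : finType) (pos neg : rel V) (D : V -> R) (delta : R).
Hypothesis G : signed_graph V pos neg.
Hypothesis HD : drawing V D.

Let D_on_circ v : on_circ (D v) := proj1 HD v.

Lemma pos_neg_image_neq i j k : pos i j -> neg i k -> D j <> D k.
Proof.
  intros Hij Hik Hjk. apply (proj2 HD) in Hjk; subst k.
  have := sg_disj _ _ _ G i j. by rewrite Hij Hik.
Qed.

Lemma pos_neg_apart i j k a : pos i j -> neg i k ->
  cong2PI (D j - D i) a -> cong2PI (D k - D i) a -> False.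
Proof.
  intros Hij Hik Hja Hka. apply (pos_neg_image_neq i j k Hij Hik).
  exact (on_circ_sub_cong2PI_eq _ _ _ a (D_on_circ j) (D_on_circ k) Hja Hka).
Qed.

Lemma valid_of_almost_valid_ge_PI : PI <= delta ->
  (forall i j k, pos i j -> neg i k ->
     cdist (D i) (D j) <= delta /\ delta <= cdist (D i) (D k)) ->
  valid_drawing V pos neg D.
Proof.
  intros Hdelta Hav. split; [exact HD|]. intros i j k Hij Hik.
  destruct (Hav i j k Hij Hik) as [Hj Hk].
  pose proof (cdist_le_PI (D i) (D j)). pose proof (cdist_le_PI (D i) (D k)).
  destruct (Rlt_or_le (cdist (D i) (D j)) (cdist (D i) (D k))) as [| Hle];
    [assumption | exfalso].
  apply (pos_neg_image_neq i j k Hij Hik).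
  apply (cdist_PI_eq (D i)); auto; lra.
Qed.

Lemma tight_dir p q : cdist (D p) (D q) = delta ->
  exists b, cong2PI (D q - D p) (sgn b * delta).
Proof.
  intros Hpq. destruct (cdist_rep (D p) (D q)) as [a [_ [Hqa Ea]]]; auto.
  assert (a = delta \/ a = - delta) as [-> | ->] by (split_Rabs; lra);
  [exists true | exists false]; simpl;
  [rewrite Rmult_1_l | replace (-1 * delta) with (- delta) by ring]; exact Hqa.
Qed.

Definition pulled (v : V) (b : bool) : Prop :=
  exists j k, pos v j /\ neg v k /\
    cong2PI (D j - D v) (sgn b * delta) /\ cong2PI (D k - D v) (sgn (~~ b) * delta).

Lemma pulled_pos v w b t : pos v w -> cong2PI (D w - D v) (sgn t * delta) ->
  pulled v b -> b = t.
Proof.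
  intros Hvw Hw [j [k [_ [Hvk [_ Hk]]]]].
  case: (eqVneq b t) => [// | /negPf Hbt]; exfalso.
  apply (pos_neg_apart v w k (sgn t * delta) Hvw Hvk Hw).
  by case: b t Hbt Hk Hw => [] [].
Qed.

Lemma pulled_neg v w b t : neg v w -> cong2PI (D w - D v) (sgn t * delta) ->
  pulled v b -> b = ~~ t.
Proof.
  intros Hvw Hw [j [k [Hvj [_ [Hj _]]]]].
  case: (eqVneq b t) => [Hbt | ]; last by case: b t Hw Hj => [] [].
  subst t; exfalso. exact (pos_neg_apart v j w _ Hvj Hvw Hj Hw).
Qed.

Lemma exists_small_eps : 0 < delta < PI -> exists eps, 0 < eps /\
  2 * eps <= delta /\ delta + 2 * eps <= PI /\
  (forall p q, 0 < cdist (D p) (D q) -> 2 * eps < cdist (D p) (D q)) /\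
  (forall p q, cdist (D p) (D q) <> delta -> 4 * eps < Rabs (cdist (D p) (D q) - delta)).
Proof.
  intros Hdelta.
  destruct (exists_pos_lower_bound _ (fun pq : V * V => cdist (D pq.1) (D pq.2)))
    as [m1 [Hm1 H1]].
  destruct (exists_pos_lower_bound _ (fun pq : V * V => Rabs (cdist (D pq.1) (D pq.2) - delta)))
    as [m2 [Hm2 H2]].
  set m := Rmin (Rmin m1 m2) (Rmin delta (PI - delta)).
  assert (m <= Rmin m1 m2 /\ m <= Rmin delta (PI - delta)) as [Hma Hmb]
    by (split; [apply Rmin_l | apply Rmin_r]).
  pose proof (Rmin_l m1 m2); pose proof (Rmin_r m1 m2).
  pose proof (Rmin_l delta (PI - delta)); pose proof (Rmin_r delta (PI - delta)).
  assert (0 < m) by (repeat apply Rmin_glb_lt; lra).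
  exists (m / 8). repeat split; try lra.
  - intros p q Hpq. specialize (H1 (p, q) Hpq). simpl in H1. lra.
  - intros p q Hpq. assert (Hgap : 0 < Rabs (cdist (D p) (D q) - delta))
      by (apply Rabs_pos_lt; lra).
    specialize (H2 (p, q) Hgap). simpl in H2. lra.
Qed.

Variable eps : R.
Hypothesis eps_gt0 : 0 < eps.
Hypothesis eps_le_delta : 2 * eps <= delta.
Hypothesis eps_le_PI : delta + 2 * eps <= PI.
Hypothesis eps_sep : forall p q, 0 < cdist (D p) (D q) -> 2 * eps < cdist (D p) (D q).
Hypothesis eps_gap : forall p q,
  cdist (D p) (D q) <> delta -> 4 * eps < Rabs (cdist (D p) (D q) - delta).

Definition shift (v : V) : R :=
  if excluded_middle_informative (pulled v true) then eps
  else if excluded_middle_informative (pulled v false) then - eps else 0.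

Lemma Rabs_shift_le v : Rabs (shift v) <= eps.
Proof. unfold shift; repeat destruct excluded_middle_informative; simpl; split_Rabs; lra. Qed.

Lemma shift_cases v : shift v = 0 \/ exists b, pulled v b /\ shift v = sgn b * eps.
Proof.
  unfold shift. destruct excluded_middle_informative as [Ht |]; simpl.
  { right; exists true; simpl; split; [exact Ht | ring]. }
  destruct excluded_middle_informative as [Hf |]; simpl; [|by left].
  right; exists false; simpl; split; [exact Hf | ring].
Qed.

Lemma shift_pulled v b : pulled v b -> shift v = sgn b * eps.
Proof.
  intros Hb. unfold shift.
  destruct excluded_middle_informative as [Ht | Hnt]; simpl.
  - case: b Hb => Hb /=; [ring | exfalso].
    destruct Hb as [j [k [Hvj [_ [Hj _]]]]].
    by have := pulled_pos v j true false Hvj Hj Ht.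
  - case: b Hb => Hb; [contradiction|].
    destruct excluded_middle_informative; simpl; [ring | contradiction].
Qed.

Lemma shift_pos_neighbour v w t : pos v w -> cong2PI (D w - D v) (sgn t * delta) ->
  shift v = 0 \/ shift v = sgn t * eps.
Proof.
  intros Hvw Hw. destruct (shift_cases v) as [| [b [Hb ->]]]; [by left | right].
  by rewrite (pulled_pos v w b t Hvw Hw Hb).
Qed.

Lemma shift_neg_neighbour v w t : neg v w -> cong2PI (D w - D v) (sgn t * delta) ->
  shift v = 0 \/ shift v = sgn (~~ t) * eps.
Proof.
  intros Hvw Hw. destruct (shift_cases v) as [| [b [Hb ->]]]; [by left | right].
  by rewrite (pulled_neg v w b t Hvw Hw Hb).
Qed.

Definition perturbed (v : V) : R := wrap (D v + shift v).

Lemma perturbed_spec v : on_circ (perturbed v) /\ cong2PI (perturbed v) (D v + shift v).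
Proof.
  apply wrap_spec. destruct (D_on_circ v). pose proof (Rabs_shift_le v).
  split_Rabs; lra.
Qed.

Let perturbed_on_circ v : on_circ (perturbed v) := proj1 (perturbed_spec v).

Lemma perturbed_sub p q x : cong2PI (D q - D p) x ->
  cong2PI (perturbed q - perturbed p) (x + (shift q - shift p)).
Proof.
  intros Hx. apply (cong2PI_trans _ ((D q - D p) + (shift q - shift p))).
  - destruct (cong2PI_sub _ _ _ _ (proj2 (perturbed_spec q)) (proj2 (perturbed_spec p)))
      as [m Hm].
    exists m; lra.
  - exact (cong2PI_addr _ _ _ Hx).
Qed.

Lemma perturbed_cdist_close p q :
  Rabs (cdist (perturbed p) (perturbed q) - cdist (D p) (D q)) <= 2 * eps.
Proof.
  apply (Rle_trans _ (Rabs (shift q - shift p))).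
  - apply cdist_lipschitz; auto. exact (perturbed_sub p q _ (cong2PI_refl _)).
  - pose proof (Rabs_shift_le p); pose proof (Rabs_shift_le q). split_Rabs; lra.
Qed.

Lemma perturbed_inj p q : perturbed p = perturbed q -> p = q.
Proof.
  intros Hpq. apply (proj2 HD), cdist_eq0; auto.
  pose proof (perturbed_cdist_close p q) as Hclose.
  rewrite Hpq cdist_self in Hclose.
  pose proof (cdist_ge0 _ _ (D_on_circ p) (D_on_circ q)).
  destruct (Rle_lt_or_eq_dec _ _ H) as [Hlt | <-]; [|reflexivity].
  pose proof (eps_sep p q Hlt). split_Rabs; lra.
Qed.

(* The pulled vertex i moves by [sgn b * eps] towards j, while j and k move
   by 0 or [sgn (~~ b) * eps]: towards i for j, away from i for k. *)
Lemma tight_pair_separated i j k : pos i j -> neg i k ->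
  cdist (D i) (D j) = delta -> cdist (D i) (D k) = delta ->
  cdist (perturbed i) (perturbed j) < cdist (perturbed i) (perturbed k).
Proof.
  intros Hij Hik Ej Ek.
  destruct (tight_dir i j Ej) as [b Hj]. destruct (tight_dir i k Ek) as [t Hk].
  assert (t = ~~ b) as ->.
  { case: (eqVneq t b) => [Htb | ]; last by case: t b Hj Hk => [] [].
    subst t; exfalso. exact (pos_neg_apart i j k _ Hij Hik Hj Hk). }
  have Hi := shift_pulled i b (ex_intro _ j (ex_intro _ k (conj Hij (conj Hik (conj Hj Hk))))).
  have Hji : pos j i by rewrite (sg_pos_sym _ _ _ G).
  have Hki : neg k i by rewrite (sg_neg_sym _ _ _ G).
  have Sj := shift_pos_neighbour j i (~~ b) Hji (cong2PI_sub_swap _ _ _ _ Hj).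
  have Hk' := cong2PI_sub_swap _ _ _ _ Hk. rewrite negbK in Hk'.
  have Sk := shift_neg_neighbour k i b Hki Hk'.
  have Cj := perturbed_sub i j _ Hj. have Ck := perturbed_sub i k _ Hk.
  rewrite Hi in Cj Ck.
  clear Hj Hk Hk'. case: b Hi Sj Sk Cj Ck => /= Hi [->| ->] [->| ->] Cj Ck;
    (rewrite (cdist_cong2PI _ _ _ (perturbed_on_circ i) (perturbed_on_circ j) _ Cj);
       [|split_Rabs; lra]);
    (rewrite (cdist_cong2PI _ _ _ (perturbed_on_circ i) (perturbed_on_circ k) _ Ck);
       [|split_Rabs; lra]);
    split_Rabs; lra.
Qed.

Lemma perturbed_valid :
  (forall i j k, pos i j -> neg i k ->
     cdist (D i) (D j) <= delta /\ delta <= cdist (D i) (D k)) ->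
  valid_drawing V pos neg perturbed.
Proof.
  intros Hav. split; [split; [exact perturbed_on_circ | exact perturbed_inj]|].
  intros i j k Hij Hik. destruct (Hav i j k Hij Hik) as [Hj Hk].
  pose proof (perturbed_cdist_close i j). pose proof (perturbed_cdist_close i k).
  destruct (Req_dec (cdist (D i) (D j)) delta) as [Ej | Nj].
  - destruct (Req_dec (cdist (D i) (D k)) delta) as [Ek | Nk].
    + exact (tight_pair_separated i j k Hij Hik Ej Ek).
    + pose proof (eps_gap i k Nk). split_Rabs; lra.
  - pose proof (eps_gap i j Nj). split_Rabs; lra.
Qed.

End Perturbation.

Theorem lemma2 (V : finType) (pos neg : rel V) (D : V -> R) :
  signed_graph V pos neg ->
  almost_valid_drawing V pos neg D ->
  exists D' : V -> R, valid_drawing V pos neg D'.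
Proof.
  intros G [HD [delta [Hdelta Hav]]].
  destruct (Rlt_or_le delta PI) as [Hlt | Hge].
  - destruct (exists_small_eps V D delta (conj Hdelta Hlt))
      as [eps [He0 [He1 [He2 [He3 He4]]]]].
    exists (perturbed V pos neg D delta eps).
    exact (perturbed_valid V pos neg D delta G HD eps He0 He1 He2 He3 He4 Hav).
  - exists D. exact (valid_of_almost_valid_ge_PI V pos neg D delta G HD Hge Hav).
Qed.
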